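(* Let $D$ and $H$ be digraphs such that $H$ is equivalent to $D$ under source-sink identification. Then $\operatorname{dbw}(H)=\operatorname{dbw}(D)$.
   Context: All digraphs are finite and loopless, without parallel edges. A source is a vertex with no incoming edges, a sink a vertex with no outgoing edges. Two vertices $x\neq y$ are source/sink-identifiable if both are sources or both are sinks. Identifying them means replacing $x,y$ by a single new vertex $\gamma$ with in-neighbourhood $N^-(x)\cup N^-(y)$ and out-neighbourhood $N^+(x)\cup N^+(y)$. $H$ is equivalent to $D$ under source-sink identification if $H$ is obtained from $D$ by a finite sequence of identifications of source/sink-identifiable pairs. Directed branch-width: for $X\subseteq E(D)$, $S^V_X=\{y: \exists x,z,\ \vec{xy}\in E(D)\setminus X,\ \vec{yz}\in X\}$, $f_D(X)=|S^V_X\cup S^V_{E(D)\setminus X}|$; a directed branch decomposition is $(T,\beta)$ with $T$ a tree of maximum degree at most three and $\beta$ a bijection from the leaves of $T$ onto $E(D)$; the order of a tree edge is $f_D(\beta(Y))$ for $Y$ the leaves on one side; the width is the maximum order (0 if none), and $\operatorname{dbw}(D)$ is the minimum width. *)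

From mathcomp Require Import all_boot.
Set Implicit Arguments. Unset Strict Implicit. Unset Printing Implicit Defensive.

Record digraph := Digraph {
  dV : finType;
  dE : rel dV;
  dE_irr : irreflexive dE }.

Definition edges (D : digraph) : {set dV D * dV D} :=
  [set p | dE p.1 p.2].

Definition is_source (D : digraph) (x : dV D) : bool := [forall u, ~~ dE u x].
Definition is_sink (D : digraph) (x : dV D) : bool := [forall u, ~~ dE x u].

Definition ss_identifiable (D : digraph) (x y : dV D) : bool :=
  (x != y) && ((is_source x && is_source y) || (is_sink x && is_sink y)).

(* H is (an isomorphic copy of) the digraph obtained from D by identifying
   x and y into a single vertex: f : V(D) -> V(H) is surjective, glues
   exactly x and y, and the arcs of H are the images of the arcs of D
   (so the new vertex gets in/out-neighbourhoods N^-(x)∪N^-(y), N^+(x)∪N^+(y)). *)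
Definition identification_of (D H : digraph) (x y : dV D) : Prop :=
  exists f : dV D -> dV H,
    [/\ (forall b : dV H, exists a, f a = b),
        f x = f y,
        (forall u v, f u = f v -> u = v \/ (u = x /\ v = y) \/ (u = y /\ v = x))
      & (forall a b : dV H, dE a b <->
           exists u v, [/\ f u = a, f v = b & dE u v])].

Definition ss_step (D H : digraph) : Prop :=
  exists x y : dV D, ss_identifiable x y /\ identification_of H x y.

Definition isomorphic (D H : digraph) : Prop :=
  exists f : dV D -> dV H, bijective f /\ (forall u v, dE (f u) (f v) = dE u v).

Inductive ss_equiv : digraph -> digraph -> Prop :=
  | ss_equiv_iso D H : isomorphic D H -> ss_equiv D H
  | ss_equiv_step D D' H : ss_step D D' -> ss_equiv D' H -> ss_equiv D H.

Section DBW.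
Variable D : digraph.
Local Notation V := (dV D).

Definition SV (X : {set V * V}) : {set V} :=
  [set y | [exists x, exists z,
      ((x, y) \in edges D :\: X) && ((y, z) \in X)]].

Definition fD (X : {set V * V}) : nat :=
  #|SV X :|: SV (edges D :\: X)|.

Definition is_tree (T : finType) (te : rel T) : Prop :=
  [/\ symmetric te, irreflexive te,
      (forall u v, connect te u v)
    & (forall (x : T) (p : seq T), uniq (x :: p) -> 2 <= size p ->
         path te x p -> ~~ te (last x p) x)].

Definition tdeg (T : finType) (te : rel T) (t : T) : nat := #|[set u | te t u]|.

Definition tleaves (T : finType) (te : rel T) : {set T} :=
  [set t | tdeg te t <= 1].

Record dbdec := DBDec {
  dT : finType;
  dTE : rel dT;
  dT_tree : is_tree dTE;
  dT_deg : forall t, tdeg dTE t <= 3;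
  dbeta : dT -> V * V;
  dbeta_inj : {in tleaves dTE &, injective dbeta};
  dbeta_in : forall t, t \in tleaves dTE -> dbeta t \in edges D;
  dbeta_onto : forall e, e \in edges D -> exists2 t, t \in tleaves dTE & dbeta t = e }.

(* leaves on the side of u after deleting tree edge tu *)
Definition side (B : dbdec) (t u : dT B) : {set dT B} :=
  [set l in tleaves (@dTE B) |
     connect (fun a b => dTE a b && ~~ (((a == t) && (b == u)) || ((a == u) && (b == t)))) u l].

Definition edge_order (B : dbdec) (t u : dT B) : nat :=
  fD (@dbeta B @: side t u).

Definition width (B : dbdec) : nat :=
  \max_(p : dT B * dT B | dTE p.1 p.2) edge_order p.1 p.2.

Definition dbw_is (k : nat) : Prop :=
  (exists B : dbdec, width B = k) /\ (forall B : dbdec, k <= width B).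

End DBW.

From mathcomp Require Import all_boot.
From Stdlib Require Import ClassicalEpsilon.
Set Implicit Arguments. Unset Strict Implicit. Unset Printing Implicit Defensive.

(* Both an isomorphism and a single identification of two sources (or two
   sinks) x, y of D yield a "quotient map" pi : V(D) -> V(H): pi maps arcs
   to arcs, every arc of H lifts to an arc of D, and pi is injective except
   on a set Q of at most two vertices that are all sources or all sinks.
   Consequently pi never glues a vertex having an out-arc to one having an
   in-arc, so it is injective on the union of any S^V_X and S^V_{E\X}, and
   an arc of H has at most two preimages.  For such a pi we transform decompositions both ways:
   - from D to H: keep one representative arc above each arc of H, restrict
     the tree to the subtree spanned by the leaves carrying representatives
     and relabel them by their images (Section Restriction);
   - from H to D: a leaf whose arc has a unique preimage is relabelled by it,
     a leaf whose arc has two preimages gets two new pendant leaves carrying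
     them (Section Expansion).
   In both cases every edge order of the new decomposition is bounded by an
   edge order of the old one (the counting lemmas of Section Counting), so
   the width does not increase.  Chaining along ss_equiv, every
   decomposition of D is dominated in width by one of H and conversely,
   whence dbw(D) = dbw(H). *)

Section Trees.
Variables (T : finType) (te : rel T).

Definition cut (t u : T) : rel T :=
  fun a b => te a b && ~~ (((a == t) && (b == u)) || ((a == u) && (b == t))).

Lemma cut_swap t u : cut t u =2 cut u t.
Proof.
move=> a b; rewrite /cut; congr (_ && ~~ _).
by case: (a == t); case: (b == u); case: (a == u); case: (b == t).
Qed.

Lemma cut_sym t u : symmetric te -> symmetric (cut t u).
Proof.
move=> sym a b; rewrite /cut sym; congr (_ && ~~ _).
by case: (a == t); case: (b == u); case: (a == u); case: (b == t).
Qed.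

Lemma cut_cover t u w : connect te u w ->
  connect (cut t u) u w || connect (cut t u) t w.
Proof.
move/connectP=> [p]; elim/last_ind: p w => [|p z IH] w /=.
  by move=> _ ->; rewrite connect0.
rewrite rcons_path last_rcons => /andP[pp ez] ->.
have /orP[c|c] := IH _ pp erefl.
all: case R: (cut t u (last u p) z); first by rewrite (connect_trans c (connect1 R)) ?orbT.
all: move: R; rewrite /cut ez /= => /negbFE /orP[] /andP[_ /eqP->]; by rewrite connect0 ?orbT.
Qed.

(* in a tree, cutting an edge tu separates u from t: no vertex is reachable
   from both (otherwise the two paths and tu would close a cycle) *)
Lemma cut_separates t u w : is_tree te -> te t u ->
  connect (cut t u) u w -> connect (cut t u) t w -> False.
Proof.
case=> sym irr _ acyc tu cuw ctw.
have cut_ut : connect (cut t u) u t.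
  by apply: connect_trans cuw _; rewrite (sym_connect_sym (cut_sym t u sym)).
move/connectP: cut_ut => [p pp lp].
move: lp; case: (shortenP pp) => p' pp' up' _ lp.
have pt : path te u p' by apply: sub_path pp' => a b /andP[].
case: p' pp' up' pt lp => [|z1 [|z2 p2]] /=.
- by move=> _ _ _ tE; move: tu; rewrite tE irr.
- by move=> + _ _; rewrite /= andbT => + tE; rewrite -tE /cut !eqxx /= orbT andbF.
- move=> _ up pt lt; have := acyc u [:: z1, z2 & p2] up isT pt.
  by rewrite /= -lt tu.
Qed.

Lemma cycle_two_neighbours x p w : symmetric te -> uniq (x :: p) -> 2 <= size p ->
  path te x p -> te (last x p) x -> w \in x :: p ->
  exists a b, [/\ a != b, te w a & te w b].
Proof.
move=> sym up sp pp lp wi.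
have cyc : cycle te (x :: p) by rewrite /= rcons_path pp lp.
case: (rot_to wi) => i s' rE.
have := rot_cycle i te (x :: p); rewrite rE cyc => cyc'.
have := rot_uniq i (x :: p); rewrite rE up => up'.
have := size_rot i (x :: p); rewrite rE /= => [[ss]].
case: s' rE cyc' up' ss => [|a [|b s]] //= rE; try by move=> _ _ sE; move: sp; rewrite -sE.
move=> /and3P[wa _]; rewrite rcons_path => /andP[_ lw] /and4P[_ anin _ _] _.
exists a, (last b s); split => //; last by rewrite sym.
by apply/eqP => aE; move: anin; rewrite aE mem_last.
Qed.

Lemma connect_morph (T2 : finType) (e2 : rel T2) (f : T -> T2) :
  (forall a b, te a b -> connect e2 (f a) (f b)) ->
  forall a b, connect te a b -> connect e2 (f a) (f b).
Proof.
move=> step a b /connectP[p pp ->]; elim: p a pp => [|z p IH] a /=.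
  by rewrite connect0.
by move=> /andP[az pz]; apply: connect_trans (step _ _ az) (IH _ pz).
Qed.

End Trees.

Lemma in_edges (G : digraph) (p : dV G * dV G) : (p \in edges G) = dE p.1 p.2.
Proof. by rewrite inE. Qed.

Lemma SVP (G : digraph) (X : {set dV G * dV G}) y :
  reflect (exists x z, [/\ dE x y, (x, y) \notin X & (y, z) \in X]) (y \in SV X).
Proof.
rewrite inE; apply: (iffP existsP) => [[x /existsP[z /andP[]]]|[x [z [xy nX yz]]]].
  by rewrite inE in_edges /= => /andP[nX xy] yz; exists x, z.
by exists x; apply/existsP; exists z; rewrite inE in_edges /= xy nX yz.
Qed.

Lemma SV_set0 (G : digraph) : SV (set0 : {set dV G * dV G}) = set0.
Proof. by apply/setP => y; rewrite in_set0; apply/negP => /SVP [x [z [_ _]]]; rewrite in_set0. Qed.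

Lemma SV_edges (G : digraph) : SV (edges G) = set0.
Proof.
apply/setP => y; rewrite in_set0; apply/negP => /SVP [x [z [xy /negP []]]].
by rewrite in_edges.
Qed.

Lemma fD_complement (G : digraph) (X : {set dV G * dV G}) :
  X \subset edges G -> fD (edges G :\: X) = fD X.
Proof.
move=> sX; rewrite /fD.
have -> : edges G :\: (edges G :\: X) = X.
  apply/setP => e; rewrite !inE; case: (boolP (e \in X)) => eX; rewrite ?andbF ?andbT //.
    by move: (subsetP sX _ eX); rewrite inE.
  by case: (dE e.1 e.2).
by rewrite setUC.
Qed.

Section Decompositions.
Variables (G : digraph) (B : dbdec G).
Local Notation T := (dT B).
Local Notation te := (@dTE G B).
Local Notation beta := (@dbeta G B).
Local Notation L := (tleaves te).

Lemma in_side t u l : (l \in side t u) = (l \in L) && connect (cut te t u) u l.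
Proof. by rewrite inE. Qed.

Lemma side_complement t u : te t u -> beta @: side u t = edges G :\: beta @: side t u.
Proof.
move=> tu; have [_ _ conn _] := dT_tree B.
apply/setP => e; apply/imsetP/idP => [[l]|].
  rewrite in_side => /andP[lL cl] ->.
  rewrite in_setD (dbeta_in lL) andbT; apply/imsetP => [[l']].
  rewrite in_side => /andP[l'L cl'] E.
  move: cl'; rewrite -(dbeta_inj lL l'L E) => cl'.
  apply: (cut_separates (dT_tree B) tu cl').
  by rewrite (eq_connect (cut_swap te t u)).
rewrite in_setD => /andP[nI eE].
have [l lL lE] := @dbeta_onto _ B _ eE.
exists l => //; rewrite in_side lL /=.
have /orP[cu|] := cut_cover t (conn u l); last by rewrite (eq_connect (cut_swap te t u)).
by case/negP: nI; rewrite -lE; apply: imset_f; rewrite in_side lL cu.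
Qed.

Lemma side_in_edges t u : beta @: side t u \subset edges G.
Proof.
by apply/subsetP => e /imsetP [l]; rewrite in_side => /andP[lL _] ->; apply: dbeta_in.
Qed.

Lemma edge_order_sym t u : te t u -> edge_order t u = edge_order u t.
Proof.
by move=> tu; rewrite /edge_order (side_complement tu) fD_complement ?side_in_edges.
Qed.

Lemma edge_order_le_width t u : te t u -> edge_order t u <= width B.
Proof.
move=> tu.
exact: (leq_bigmax_cond (P := fun p : T * T => te p.1 p.2) (F := fun p => edge_order p.1 p.2) (t, u)).
Qed.

(* a leaf l gives a tree edge whose side is {l} (or the tree is the single
   vertex l and carries all arcs) *)
Lemma leaf_order_le_width l : l \in L -> fD [set beta l] <= width B.
Proof.
move=> lL; have [sym _ conn _] := dT_tree B.
case: (pickP (te l)) => [p lp | nop].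
  have sE : side p l = [set l].
    apply/setP => x; rewrite in_side in_set1.
    apply/andP/eqP => [[xL]|->]; last by rewrite lL connect0.
    move/connectP => [[//|y q] /= /andP [/andP [ly notcut] _] _].
    move: lL notcut; rewrite inE /tdeg => /card_le1_eqP onenb.
    by rewrite (onenb y p) ?inE // !eqxx /= orbT.
  by have := @edge_order_le_width p l; rewrite /edge_order sE imset_set1 sym; apply.
have onlyl x : x = l.
  by move/connectP: (conn l x) => [[|y q] /= qp ->] //; move: qp; rewrite nop.
have -> : [set beta l] = edges G.
  apply/setP => e; rewrite inE; apply/eqP/idP => [->|eE]; first exact: dbeta_in.
  by have [l' _ <-] := @dbeta_onto _ B _ eE; rewrite (onlyl l').
by rewrite /fD setDv SV_edges SV_set0 setU0 cards0.
Qed.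

End Decompositions.

(* a digraph without arcs has a decomposition of width 0 (on the empty tree) *)
Lemma edgeless_decomposition (G : digraph) : (forall e, e \notin edges G) ->
  exists B : dbdec G, width B = 0.
Proof.
move=> none.
pose te (_ _ : void) := false; pose beta (t : void) : dV G * dV G := match t with end.
have tree : is_tree te by split => //; case.
have deg : forall t, tdeg te t <= 3 by case.
have inj : {in tleaves te &, injective beta} by case.
have bin : forall t, t \in tleaves te -> beta t \in edges G by case.
have onto : forall e, e \in edges G -> exists2 t, t \in tleaves te & beta t = e.
  by move=> e; rewrite (negbTE (none e)).
by exists (DBDec tree deg inj bin onto); rewrite /width big_pred0.
Qed.

Section Counting.
Variables (D H : digraph) (pi : dV D -> dV H) (Q : {set dV D}).
Hypothesis pi_arc : forall u v, dE u v -> dE (pi u) (pi v).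
Hypothesis pi_glue : forall u v, pi u = pi v -> u = v \/ (u \in Q /\ v \in Q).
Hypothesis Q_sources_or_sinks :
  (forall u, u \in Q -> is_source u) \/ (forall u, u \in Q -> is_sink u).

Definition arc_map (e : dV D * dV D) : dV H * dV H := (pi e.1, pi e.2).

Lemma arc_map_edge e : e \in edges D -> arc_map e \in edges H.
Proof. by rewrite !in_edges => /pi_arc. Qed.

Lemma pi_inj_inner v v' b a : dE v b -> dE a v' -> pi v = pi v' -> v = v'.
Proof.
move=> vb av' /pi_glue [//|[vQ v'Q]]; case: Q_sources_or_sinks => QS.
  by move: (QS _ v'Q) => /forallP /(_ a); rewrite av'.
by move: (QS _ vQ) => /forallP /(_ b); rewrite vb.
Qed.

Lemma arc_map_loopless e : e \in edges D -> pi e.1 <> pi e.2.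
Proof.
rewrite in_edges => ee E.
have same := pi_inj_inner ee ee E.
by move: ee; rewrite same (@dE_irr D).
Qed.

(* The basic comparison: if every arc pair crossing the boundary of Y at a
   common vertex is mapped to a pair crossing the boundary of X' in the same
   direction, then pi embeds S^V_Y and S^V_{E\Y} into S^V_{X'} and
   S^V_{E\X'} (it is injective there by pi_inj_inner). *)
Lemma fD_le_transport (Y : {set dV D * dV D}) (X' : {set dV H * dV H}) :
  Y \subset edges D ->
  (forall e1 e2, e1 \in edges D -> e2 \in edges D -> e1.2 = e2.1 ->
     e1 \notin Y -> e2 \in Y -> arc_map e1 \notin X' /\ arc_map e2 \in X') ->
  (forall e1 e2, e1 \in edges D -> e2 \in edges D -> e1.2 = e2.1 ->
     e1 \in Y -> e2 \notin Y -> arc_map e1 \in X' /\ arc_map e2 \notin X') ->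
  fD Y <= fD X'.
Proof.
move=> sY into out; rewrite /fD.
have inner v : v \in SV Y :|: SV (edges D :\: Y) -> exists a b, dE a v /\ dE v b.
  case/setUP => /SVP [x [z [xv _ vz]]]; exists x, z; split => //.
    by move: (subsetP sY _ vz); rewrite in_edges.
  by move: vz; rewrite inE in_edges => /andP[].
rewrite -(card_in_imset (f := pi)); last first.
  move=> u v /inner [a [b [au ub]]] /inner [a' [b' [av vb]]].
  exact: pi_inj_inner ub av.
apply: subset_leq_card; apply/subsetP => w /imsetP [v vin ->].
case/setUP: vin => /SVP [x [z [xv nX vz]]].
  have ez : (v, z) \in edges D by apply: (subsetP sY).
  have ex : (x, v) \in edges D by rewrite in_edges.
  have [h h'] := into _ _ ex ez erefl nX vz.
  by apply/setUP; left; apply/SVP; exists (pi x), (pi z); split => //; apply: pi_arc.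
have ex : (x, v) \in edges D by rewrite in_edges.
move: vz; rewrite inE => /andP [nY ez].
move: nX; rewrite inE ex andbT negbK => xY.
have [h h'] := out _ _ ex ez erefl xY nY.
apply/setUP; right; apply/SVP; exists (pi x), (pi z); split.
- exact: pi_arc.
- by rewrite inE negb_and negbK h.
- by rewrite inE h' (arc_map_edge ez).
Qed.

Lemma fD_preimage_le (X' : {set dV H * dV H}) :
  fD [set e in edges D | arc_map e \in X'] <= fD X'.
Proof.
apply: fD_le_transport.
- by apply/subsetP => e; rewrite inE => /andP[].
- by move=> e1 e2; rewrite !in_edges => ee1 ee2 _; rewrite !inE ee1 ee2.
- by move=> e1 e2; rewrite !in_edges => ee1 ee2 _; rewrite !inE ee1 ee2.
Qed.

Lemma fD_single_le c : c \in edges D -> fD [set c] <= fD [set arc_map c].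
Proof.
move=> ec; apply: fD_le_transport.
- by rewrite sub1set.
- move=> e1 e2 ee1 _ E12; rewrite !inE => n1 /eqP E2; subst e2.
  split => //; apply/eqP => P; move: P ee1 E12.
  case: e1 c ec n1 => [a b] [c1 c2] ec n1 [_ P] _ /= E; subst b.
  by apply: (arc_map_loopless ec); rewrite /= -P.
- move=> e1 e2 _ ee2 E12; rewrite !inE => /eqP E1 n2; subst e1.
  split => //; apply/eqP => P; move: P ee2 E12.
  case: e2 c ec n2 => [a b] [c1 c2] ec n2 [P _] _ /= E; subst a.
  by apply: (arc_map_loopless ec); rewrite /= -P.
Qed.

Section Representatives.
Variable S : {set dV D * dV D}.
Hypothesis S_edges : S \subset edges D.
Hypothesis S_inj : {in S &, injective arc_map}.
Hypothesis S_onto : forall e', e' \in edges H -> exists2 s, s \in S & arc_map s = e'.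

Lemma SV_image_sub (Y : {set dV D * dV D}) : SV (arc_map @: (Y :&: S)) \subset pi @: SV Y.
Proof.
apply/subsetP => w /SVP [a [b [aw nI wb]]].
have : (a, w) \in edges H by rewrite in_edges.
case/S_onto => s1 s1S s1E.
case/imsetP: wb => s /setIP [sY sS] sE.
have es : s \in edges D by apply: (subsetP S_edges).
have es1 : s1 \in edges D by apply: (subsetP S_edges).
have E : s.1 = s1.2.
  apply: (@pi_inj_inner _ _ s.2 s1.1); rewrite -?in_edges -?surjective_pairing //.
  by case: sE => <- _; case: s1E => _ ->.
apply/imsetP; exists s.1; last by case: sE.
apply/SVP; exists s1.1, s.2; split; rewrite -?surjective_pairing //.
- by rewrite E -in_edges.
- rewrite E -surjective_pairing; apply: contra nI => s1Y.
  by rewrite -s1E; apply: imset_f; rewrite inE s1Y.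
Qed.

Lemma fD_image_le (X : {set dV D * dV D}) : fD (arc_map @: (X :&: S)) <= fD X.
Proof.
have cE : edges H :\: arc_map @: (X :&: S) = arc_map @: ((edges D :\: X) :&: S).
  apply/setP => e'; apply/idP/idP.
    rewrite inE => /andP [nI /S_onto [s sS sE]].
    apply/imsetP; exists s => //.
    rewrite in_setI sS andbT in_setD (subsetP S_edges _ sS) andbT.
    by apply: contra nI => sX; rewrite -sE; apply: imset_f; rewrite inE sX.
  case/imsetP => s /setIP [/setDP [es nX] sS] ->.
  rewrite in_setD (arc_map_edge es) andbT; apply/imsetP => [[s2]].
  rewrite inE => /andP[s2X s2S] E; move: nX; rewrite (S_inj sS s2S E).
  by rewrite s2X.
rewrite /fD cE; apply: leq_trans (leq_imset_card pi _).
by apply: subset_leq_card; rewrite imsetU; apply: setUSS; apply: SV_image_sub.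
Qed.

End Representatives.

Section FibreBound.
Hypothesis Q_small : #|Q| <= 2.

Definition fibre (e' : dV H * dV H) : {set dV D * dV D} :=
  [set e in edges D | arc_map e == e'].

Lemma in_fibre e e' : (e \in fibre e') = (e \in edges D) && (arc_map e == e').
Proof. by rewrite !inE. Qed.

(* a vertex of H has at most two preimages: more than one forces them into Q *)
Lemma preimage_le2 w : #|[set v | pi v == w]| <= 2.
Proof.
case: (boolP ([set v | pi v == w] \subset Q)) => [sQ|/subsetPn [v]].
  exact: leq_trans (subset_leq_card sQ) Q_small.
rewrite inE => /eqP vw vQ; apply: leq_trans (_ : #|[set v]| <= 2); last by rewrite cards1.
apply: subset_leq_card; apply/subsetP => u; rewrite !inE => /eqP uw.
case: (pi_glue (etrans uw (esym vw))) => [->|[_ vQ']]; first exact: eqxx.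
by rewrite vQ' in vQ.
Qed.

(* an arc of H has at most two preimages: they share one end and their other
   ends are distinct preimages of a single vertex *)
Lemma fibre_le2 e' : #|fibre e'| <= 2.
Proof.
have fib e : e \in fibre e' -> [/\ dE e.1 e.2, pi e.1 = e'.1 & pi e.2 = e'.2].
  by rewrite in_fibre in_edges => /andP[ee /eqP <-]; split.
have pairE (e f : dV D * dV D) : e.1 = f.1 -> e.2 = f.2 -> e = f.
  by case: e f => [? ?] [? ?] /= -> ->.
case: Q_sources_or_sinks => QS.
- (* the arcs of a fibre share their head, their tails lie above e'.1 *)
  have head e f : e \in fibre e' -> f \in fibre e' -> e.2 = f.2.
    move=> /fib[ee _ pe] /fib[ef _ pf]; case: (pi_glue (etrans pe (esym pf))) => [//|[eQ _]].
    by move: (QS _ eQ) => /forallP /(_ e.1); rewrite ee.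
  rewrite -(card_in_imset (f := fst)); last first.
    by move=> e f eF fF E; apply: pairE E (head e f eF fF).
  apply: leq_trans (preimage_le2 e'.1); apply: subset_leq_card.
  by apply/subsetP => v /imsetP[e /fib[_ pe _] ->]; rewrite inE pe.
- (* the arcs of a fibre share their tail, their heads lie above e'.2 *)
  have tail e f : e \in fibre e' -> f \in fibre e' -> e.1 = f.1.
    move=> /fib[ee pe _] /fib[ef pf _]; case: (pi_glue (etrans pe (esym pf))) => [//|[eQ _]].
    by move: (QS _ eQ) => /forallP /(_ e.2); rewrite ee.
  rewrite -(card_in_imset (f := snd)); last first.
    by move=> e f eF fF E; apply: pairE (tail e f eF fF) E.
  apply: leq_trans (preimage_le2 e'.2); apply: subset_leq_card.
  by apply/subsetP => v /imsetP[e /fib[_ _ pe] ->]; rewrite inE pe.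
Qed.

End FibreBound.

End Counting.

(* Boolean reflection of an arbitrary proposition, used to carve a subtree
   out of a decomposition tree by a non-decidable membership condition. *)
Definition decide (P : Prop) : bool := if excluded_middle_informative P then true else false.

Lemma decideP P : reflect P (decide P).
Proof. by rewrite /decide; case: excluded_middle_informative => h; constructor. Qed.

Section Restriction.
Variables (D H : digraph) (pi : dV D -> dV H) (Q : {set dV D}).
Hypothesis pi_arc : forall u v, dE u v -> dE (pi u) (pi v).
Hypothesis arc_lift : forall a b, dE a b -> exists u v, [/\ pi u = a, pi v = b & dE u v].
Hypothesis pi_glue : forall u v, pi u = pi v -> u = v \/ (u \in Q /\ v \in Q).
Hypothesis Q_sources_or_sinks :
  (forall u, u \in Q -> is_source u) \/ (forall u, u \in Q -> is_sink u).

Definition canon (e' : dV H * dV H) := [pick e in edges D | arc_map pi e == e'].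

Lemma canonP e' s : canon e' = Some s -> (s \in edges D) && (arc_map pi s == e').
Proof. by rewrite /canon; case: pickP => [x Px [<-]|]. Qed.

Lemma canon_lift e' : e' \in edges H -> exists2 s, canon e' = Some s & s \in fibre pi e'.
Proof.
rewrite in_edges => /arc_lift [u [v [P1 P2 uv]]].
case Ec: (canon e') => [s|]; first by exists s; rewrite // in_fibre canonP.
move: Ec; rewrite /canon; case: pickP => // /(_ (u, v)).
by rewrite in_edges uv /arc_map /= P1 P2 -surjective_pairing eqxx.
Qed.

Definition reps : {set dV D * dV D} := [set e in edges D | canon (arc_map pi e) == Some e].

Lemma reps_edges : reps \subset edges D.
Proof. by apply/subsetP => e; rewrite inE => /andP[]. Qed.

Lemma reps_inj : {in reps &, injective (arc_map pi)}.
Proof.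
move=> e1 e2; rewrite !inE => /andP[_ /eqP P1] /andP[_ /eqP P2] E.
by move: P1; rewrite E P2 => [[]].
Qed.

Lemma reps_onto e' : e' \in edges H -> exists2 s, s \in reps & arc_map pi s = e'.
Proof.
move=> /canon_lift [s Es]; rewrite in_fibre => /andP[es /eqP sE].
by exists s => //; apply/setIdP; rewrite sE Es.
Qed.

Variable B : dbdec D.
Local Notation T := (dT B).
Local Notation te := (@dTE D B).
Local Notation beta := (@dbeta D B).
Local Notation L := (tleaves te).

Definition rep_leaves : {set T} := [set l in L | beta l \in reps].

Lemma rep_leaf l : l \in rep_leaves -> l \in L.
Proof. by rewrite inE => /andP[]. Qed.

Definition on_path (a b v : T) : Prop :=
  exists p, [/\ path te a p, last a p = b, uniq (a :: p) & v \in a :: p].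

Definition spanned (v : T) : bool :=
  decide (exists a b, [/\ a \in rep_leaves, b \in rep_leaves & on_path a b v]).

Local Notation KT := {v : T | spanned v}.

Definition sub_edge : rel KT := fun a b => te (val a) (val b).

Lemma sym_te : symmetric te. Proof. by case: (dT_tree B). Qed.

Lemma sub_edge_sym : symmetric sub_edge.
Proof. by move=> a b; rewrite /sub_edge sym_te. Qed.

Lemma rep_leaf_spanned a : a \in rep_leaves -> spanned a.
Proof.
move=> aS; apply/decideP; exists a, a; split => //; exists [::]; split => //.
by rewrite inE.
Qed.

Lemma path_spanned a b p : a \in rep_leaves -> b \in rep_leaves ->
  path te a p -> last a p = b -> uniq (a :: p) -> {in a :: p, forall w, spanned w}.
Proof. by move=> aS bS pp lp up w win; apply/decideP; exists a, b; split => //; exists p. Qed.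

Lemma connect_sub (x y : KT) p : path te (val x) p -> last (val x) p = val y ->
  all spanned p -> connect sub_edge x y.
Proof.
have lift a (Ha : spanned a) q : path te a q -> all spanned q ->
    exists r : seq KT, path sub_edge (Sub a Ha) r /\ map val r = q.
  elim: q a Ha => [|z q IH] a Ha /=; first by exists [::].
  move=> /andP[az pz] /andP[Hz aq]; have [r [pr rE]] := IH z Hz pz aq.
  by exists (Sub z Hz :: r); rewrite /= rE; split => //; rewrite pr andbT.
case: x => a Ha pp lp ap; have [r [pr rE]] := lift a Ha p pp ap.
apply/connectP; exists r => //; apply: val_inj.
by rewrite -lp -rE (last_map val).
Qed.

Lemma connect_from_leaf (a b : T) p (Ha : spanned a) (x : KT) :
  a \in rep_leaves -> b \in rep_leaves ->
  path te a p -> last a p = b -> uniq (a :: p) -> val x \in a :: p ->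
  connect sub_edge (Sub a Ha) x.
Proof.
move=> aS bS pp lp up xin.
have allK := path_spanned aS bS pp lp up.
case: (splitPl xin) pp up allK => p1 p2 l1 pp up allK.
apply: (@connect_sub (Sub a Ha) x p1) => //.
  by move: pp; rewrite cat_path => /andP[].
by apply/allP => w win; apply: allK; rewrite inE mem_cat win orbT.
Qed.

Lemma connect_rep_leaves (a c : T) (Ha : spanned a) (Hc : spanned c) :
  a \in rep_leaves -> c \in rep_leaves -> connect sub_edge (Sub a Ha) (Sub c Hc).
Proof.
move=> aS cS; have [_ _ conn _] := dT_tree B.
move/connectP: (conn a c) => [p pp lp].
move: lp; case: (shortenP pp) => p' pp' up' _ lp.
apply: (connect_from_leaf (b := c) (p := p')) => //.
by rewrite /= lp mem_last.
Qed.

Lemma connect_spanned (x y : KT) : connect sub_edge x y.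
Proof.
case/decideP: (valP x) => a [b [aS bS [p [pp lp up xin]]]].
case/decideP: (valP y) => c [d [cS dS [q [pq lq uq yin]]]].
have cax := connect_from_leaf (rep_leaf_spanned aS) aS bS pp lp up xin.
have ccy := connect_from_leaf (rep_leaf_spanned cS) cS dS pq lq uq yin.
rewrite (sym_connect_sym sub_edge_sym) in cax.
apply: connect_trans cax (connect_trans _ ccy).
exact: connect_rep_leaves.
Qed.

Lemma sub_tree : is_tree sub_edge.
Proof.
have [_ irr _ acyc] := dT_tree B; split.
- exact: sub_edge_sym.
- by move=> a; rewrite /sub_edge irr.
- exact: connect_spanned.
- move=> x p up sp pp.
  have := acyc (val x) (map val p).
  rewrite -(map_cons val) (map_inj_uniq val_inj) up size_map sp.
  by rewrite path_map (last_map val) => /(_ isT isT pp).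
Qed.

Lemma sub_deg (t : KT) : tdeg sub_edge t <= tdeg te (val t).
Proof.
rewrite /tdeg -(card_imset _ val_inj); apply: subset_leq_card.
by apply/subsetP => w /imsetP [u]; rewrite !inE => tu ->.
Qed.

Lemma sub_deg3 t : tdeg sub_edge t <= 3.
Proof. exact: leq_trans (sub_deg t) (dT_deg _). Qed.

(* a spanned vertex other than a representative leaf lies strictly inside a
   path between two representative leaves, so its two path neighbours are
   distinct spanned neighbours *)
Lemma inner_two_neighbours (v : KT) : val v \notin rep_leaves -> 1 < tdeg sub_edge v.
Proof.
move=> nS; case/decideP: (valP v) => a [b [aS bS [p [pp lp up vin]]]].
have allK := path_spanned aS bS pp lp up.
have na : val v != a by apply: contraNneq nS => ->.
move: vin; rewrite inE (negbTE na) /= => vin.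
case: (splitPr vin) pp lp up allK => p1 p2.
rewrite cat_path /= last_cat /= => /andP[pp1 /andP[prev_v pp2]].
case: p2 pp2 => [|n p2] pp2 lp; first by move: nS; have -> : val v = b by []; rewrite bS.
move: pp2 => /= /andP[v_next _] up allK.
have : uniq ((a :: p1) ++ (val v :: n :: p2)) by [].
rewrite cat_uniq => /and3P[_ dis _].
have nin : n \notin a :: p1.
  apply/negP => nin; move/negP: dis; apply; apply/hasP; exists n => //.
  by rewrite !inE eqxx orbT.
have Kp : spanned (last a p1).
  by apply: allK; have := mem_last a p1; rewrite !inE mem_cat => /orP[->|->]; rewrite ?orbT.
have Kn : spanned n by apply: allK; rewrite !(inE, mem_cat) eqxx !orbT.
have neq : (Sub (last a p1) Kp : KT) != Sub n Kn.
  by rewrite -val_eqE /=; apply: contraNneq nin => <-; apply: mem_last.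
rewrite /tdeg; apply: leq_trans (_ : #|[set (Sub (last a p1) Kp : KT); Sub n Kn]| <= _).
  by rewrite cards2 neq.
apply: subset_leq_card; apply/subsetP => w; rewrite !inE => /orP[] /eqP -> //.
by rewrite /sub_edge /= sym_te prev_v.
Qed.

Lemma sub_leaf (l : KT) : (l \in tleaves sub_edge) = (val l \in rep_leaves).
Proof.
apply/idP/idP => [|/rep_leaf]; last by rewrite !inE => d; exact: leq_trans (sub_deg l) d.
by apply: contraLR => /inner_two_neighbours; rewrite inE -ltnNge.
Qed.

Definition sub_beta (l : KT) : dV H * dV H := arc_map pi (beta (val l)).

Lemma sub_beta_inj : {in tleaves sub_edge &, injective sub_beta}.
Proof.
move=> l1 l2; rewrite !sub_leaf => S1 S2 E.
apply: val_inj; apply: (dbeta_inj (rep_leaf S1) (rep_leaf S2)).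
by move: S1 S2 => /setIdP[_ R1] /setIdP[_ R2]; apply: reps_inj R1 R2 E.
Qed.

Lemma sub_beta_in l : l \in tleaves sub_edge -> sub_beta l \in edges H.
Proof. by rewrite sub_leaf => /rep_leaf /dbeta_in /(arc_map_edge pi_arc). Qed.

Lemma sub_beta_onto e' : e' \in edges H -> exists2 l, l \in tleaves sub_edge & sub_beta l = e'.
Proof.
move=> /reps_onto [s sS <-].
have [l0 l0L bE] := @dbeta_onto _ B _ (subsetP reps_edges _ sS).
have l0S : l0 \in rep_leaves by rewrite inE l0L bE sS.
by exists (Sub l0 (rep_leaf_spanned l0S)); rewrite ?sub_leaf // /sub_beta /= bE.
Qed.

Definition restricted : dbdec H :=
  DBDec sub_tree sub_deg3 sub_beta_inj sub_beta_in sub_beta_onto.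

Lemma restricted_side (t u l : KT) : te (val t) (val u) ->
  (l \in tleaves sub_edge) && connect (cut sub_edge t u) u l =
  (val l \in rep_leaves) && connect (cut te (val t) (val u)) (val u) (val l).
Proof.
move=> tu.
have down a b : connect (cut sub_edge t u) a b ->
    connect (cut te (val t) (val u)) (val a) (val b).
  by apply: connect_morph => x y xy; apply: connect1; move: xy; rewrite /cut /sub_edge -!val_eqE.
rewrite sub_leaf; case: (val l \in rep_leaves) => //=.
apply/idP/idP => [|cT]; first exact: down.
have /orP[//|/down cT'] := cut_cover t (connect_spanned u l).
by case: (cut_separates (dT_tree B) tu cT cT').
Qed.

(* its edge orders are bounded by f_D of the corresponding sides of B,
   via fD_image_le applied to the system of representatives *)
Lemma restricted_order (t u : KT) : te (val t) (val u) ->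
  edge_order (B := restricted) t u <= edge_order (B := B) (val t) (val u).
Proof.
move=> tu; rewrite /edge_order.
set X := beta @: side (val t) (val u).
have -> : sub_beta @: side (B := restricted) t u = arc_map pi @: (X :&: reps).
  apply/setP => e'; apply/imsetP/imsetP => [[l]|[s]].
    rewrite inE /= => lin ->.
    move: (restricted_side l tu); rewrite lin => /esym /andP [lS cT].
    exists (beta (val l)) => //; rewrite inE; apply/andP; split.
      by apply: imset_f; rewrite inE (rep_leaf lS) cT.
    by move: lS; rewrite inE => /andP[].
  rewrite inE => /andP [/imsetP [l0 l0in ->] bS] ->.
  move: l0in; rewrite inE => /andP [l0L cT].
  have l0S : l0 \in rep_leaves by rewrite inE l0L bS.
  exists (Sub l0 (rep_leaf_spanned l0S)) => //.
  by rewrite inE /= (restricted_side _ tu) /= l0S.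
exact: (fD_image_le pi_arc pi_glue Q_sources_or_sinks reps_edges reps_inj reps_onto).
Qed.

Lemma restriction_width : width restricted <= width B.
Proof.
apply/bigmax_leqP => [[t u]] /= tu.
exact: leq_trans (restricted_order tu) (edge_order_le_width tu).
Qed.

End Restriction.

Section Expansion.
Variables (D H : digraph) (pi : dV D -> dV H) (Q : {set dV D}).
Hypothesis pi_arc : forall u v, dE u v -> dE (pi u) (pi v).
Hypothesis arc_lift : forall a b, dE a b -> exists u v, [/\ pi u = a, pi v = b & dE u v].
Hypothesis pi_glue : forall u v, pi u = pi v -> u = v \/ (u \in Q /\ v \in Q).
Hypothesis Q_sources_or_sinks :
  (forall u, u \in Q -> is_source u) \/ (forall u, u \in Q -> is_sink u).
Hypothesis Q_small : #|Q| <= 2.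

Variable B : dbdec H.
(* label for vertices that are not leaves *)
Variable default_arc : dV D * dV D.
Local Notation T := (dT B).
Local Notation te := (@dTE H B).
Local Notation beta := (@dbeta H B).
Local Notation L := (tleaves te).

Definition doubled (e' : dV H * dV H) : bool := 1 < #|fibre pi e'|.

Definition extra_arc (e : dV D * dV D) : bool := (e \in edges D) && doubled (arc_map pi e).
Local Notation C := {e : dV D * dV D | extra_arc e}.
Local Notation T' := (T + C)%type.

Definition xedge : rel T' := fun x y =>
  match x, y with
  | inl a, inl b => te a b
  | inl a, inr c | inr c, inl a => (a \in L) && (beta a == arc_map pi (val c))
  | _, _ => false
  end.

Definition xbeta (x : T') : dV D * dV D :=
  match x with inl a => odflt default_arc (canon pi (beta a)) | inr c => val c end.

Lemma leaf_label_inj a b e' : a \in L -> b \in L -> beta a = e' -> beta b = e' -> a = b.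
Proof. by move=> aL bL <- E; apply: (dbeta_inj aL bL); rewrite E. Qed.

Lemma extra_parent (c : C) : exists2 l, l \in L & beta l = arc_map pi (val c).
Proof. by case: c => e /= /andP [eE _]; apply: (@dbeta_onto _ B _ (arc_map_edge pi_arc eE)). Qed.

Lemma extra_neighbour (c : C) y : xedge (inr c) y ->
  exists l, [/\ y = inl l, l \in L & beta l = arc_map pi (val c)].
Proof. by case: y => [b|//] /andP [bL /eqP bE]; exists b. Qed.

Lemma xedge_sym : symmetric xedge.
Proof. by have [sym _ _ _] := dT_tree B; move=> [a|c] [b|d] //=; rewrite sym. Qed.

Lemma connect_inl a b : connect te a b -> connect xedge (inl a) (inl b).
Proof. by apply: connect_morph => x y xy; apply: connect1. Qed.

Lemma connect_to_inl (x : T') : exists a, connect xedge x (inl a).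
Proof.
case: x => [a|c]; first by exists a; rewrite connect0.
have [l lL lE] := extra_parent c; exists l; apply: connect1; by rewrite /= lL lE eqxx.
Qed.

(* no cycle passes through a new leaf (its only neighbour is its parent);
   a cycle avoiding them is a cycle of B *)
Lemma expanded_tree : is_tree xedge.
Proof.
have [sym irr conn acyc] := dT_tree B; split.
- exact: xedge_sym.
- by case=> [a|c] //=; rewrite irr.
- move=> x y; have [a xa] := connect_to_inl x; have [b yb] := connect_to_inl y.
  apply: connect_trans xa (connect_trans (connect_inl (conn a b)) _).
  by rewrite (sym_connect_sym xedge_sym).
- move=> x p up sp pp.
  case: (boolP (has (fun s : T' => if s is inr _ then true else false) (x :: p))).
    case/hasP => [[//|c] cin _]; apply/negP => lx.
    have [y [z [yz cy cz]]] := cycle_two_neighbours xedge_sym up sp pp lx cin.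
    have [l [yl lL lE]] := extra_neighbour cy; have [l' [zl l'L l'E]] := extra_neighbour cz.
    by move: yz; rewrite yl zl (leaf_label_inj lL l'L lE l'E) eqxx.
  case: x up pp => [x0|//] up pp /= nh.
  pose p0 := map (fun s : T' => if s is inl a then a else x0) p.
  have pE : map inl p0 = p.
    rewrite /p0 -map_comp; elim: p nh {up pp sp p0} => [//|[a|c] p IH] //=.
    by move=> nh; rewrite IH.
  move: up pp sp; rewrite -pE (last_map inl) size_map path_map => up pp sp.
  apply: acyc => //; move: up; rewrite -(map_cons inl) (map_inj_uniq) //.
  by move=> ? ? [].
Qed.

Definition pendants (a : T) : {set C} :=
  [set c | (a \in L) && (beta a == arc_map pi (val c))].

Lemma xdeg_inl a : tdeg xedge (inl a) = tdeg te a + #|pendants a|.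
Proof.
have inl_inr (K : {set C}) b : (inl b \in (inr @: K : {set T'})) = false by apply/imsetP => [[]].
have inr_inl (A : {set T}) c : (inr c \in (inl @: A : {set T'})) = false by apply/imsetP => [[]].
have inl_inj : injective (@inl T C) by move=> ? ? [].
have inr_inj : injective (@inr T C) by move=> ? ? [].
rewrite /tdeg; have -> : [set y | xedge (inl a) y] = inl @: [set b | te a b] :|: inr @: pendants a.
  apply/setP => [[b|c]]; rewrite in_setU ?inl_inr ?inr_inl ?mem_imset // !inE ?orbF //=.
  by rewrite [a \in L]inE.
rewrite cardsU !card_imset //.
have -> : (inl @: [set b | te a b] : {set T'}) :&: inr @: pendants a = set0.
  by apply/setP => [[b|c]]; rewrite in_setI ?inl_inr ?inr_inl ?andbF ?inE.
by rewrite cards0 subn0.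
Qed.

Lemma pendant_arcs a :
  val @: pendants a = if (a \in L) && doubled (beta a) then fibre pi (beta a) else set0.
Proof.
apply/setP => e; case: ifP => [/andP [aL dbl]|nd].
  apply/imsetP/idP => [[c]|eF].
    rewrite inE aL => /eqP E ->; rewrite in_fibre -E eqxx andbT.
    by case/andP: (valP c).
  have hC : extra_arc e by move: eF; rewrite in_fibre /extra_arc => /andP[-> /eqP ->].
  by exists (Sub e hC); rewrite // inE aL /=; move: eF; rewrite in_fibre => /andP[_ /eqP ->].
rewrite inE; apply/imsetP => [[c]]; rewrite inE => /andP [aL /eqP E] _; move: nd; rewrite aL /=.
by case: c E => e0 /= /andP[_ dbl] E; rewrite E dbl.
Qed.

Lemma card_pendants a :
  #|pendants a| = if (a \in L) && doubled (beta a) then #|fibre pi (beta a)| else 0.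
Proof. by rewrite -(card_imset _ val_inj) pendant_arcs; case: ifP; rewrite ?cards0. Qed.

Lemma xdeg_inr c : tdeg xedge (inr c) <= 1.
Proof.
have [l lL lE] := extra_parent c.
apply: leq_trans (_ : #|[set (inl l : T')]| <= 1); last by rewrite cards1.
apply: subset_leq_card; apply/subsetP => y; rewrite !inE => /extra_neighbour [b [-> bL bE]].
by rewrite (leaf_label_inj bL lL bE lE).
Qed.

(* degrees stay at most 3: only leaves of B gain (at most two) neighbours *)
Lemma expanded_deg x : tdeg xedge x <= 3.
Proof.
case: x => [a|c]; last exact: leq_trans (xdeg_inr c) _.
rewrite xdeg_inl card_pendants; case: ifP => [/andP [aL _]|_]; last first.
  by rewrite addn0; apply: dT_deg.
by move: aL; rewrite inE => aL; apply: leq_add aL (fibre_le2 pi_glue Q_sources_or_sinks Q_small _).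
Qed.

Lemma leaf_inr c : inr c \in tleaves xedge.
Proof. by rewrite inE; apply: xdeg_inr. Qed.

Lemma leaf_inl a : (inl a \in tleaves xedge) = (a \in L) && ~~ doubled (beta a).
Proof.
rewrite [inl a \in _]inE xdeg_inl card_pendants.
case aL: (a \in L) => /=; last by rewrite addn0; move: aL; rewrite inE => ->.
move: (aL); rewrite inE => aL'; case: ifP => dbl /=; last by rewrite addn0.
by apply/negbTE; rewrite -ltnNge; apply: leq_trans dbl (leq_addl _ _).
Qed.

Lemma xbeta_inl a s : a \in L -> ~~ doubled (beta a) -> s \in fibre pi (beta a) ->
  xbeta (inl a) = s.
Proof.
move=> aL single sF /=; have [s' -> s'F] := canon_lift arc_lift (dbeta_in aL).
by move: single; rewrite /doubled -leqNgt => /card_le1_eqP; apply.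
Qed.

Lemma xbeta_fibre a : a \in L -> xbeta (inl a) \in fibre pi (beta a).
Proof. by move=> aL; have [s /= -> sF] := canon_lift arc_lift (dbeta_in aL). Qed.

Lemma xbeta_in x : x \in tleaves xedge -> xbeta x \in edges D.
Proof.
case: x => [a|c]; last by case/andP: (valP c).
by rewrite leaf_inl => /andP [/xbeta_fibre]; rewrite in_fibre => /andP[].
Qed.

Lemma xbeta_image a : a \in L -> arc_map pi (xbeta (inl a)) = beta a.
Proof. by move/xbeta_fibre; rewrite in_fibre => /andP[_ /eqP]. Qed.

Lemma xbeta_inj : {in tleaves xedge &, injective xbeta}.
Proof.
have kept_new a (c : C) : inl a \in tleaves xedge -> xbeta (inl a) <> val c.
  rewrite leaf_inl => /andP [aL single] E; move: single; rewrite -(xbeta_image aL) E.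
  by case/andP: (valP c) => _ ->.
move=> [a|c] [b|d] //; rewrite ?leaf_inl.
- move=> /andP [aL _] /andP [bL _] E; congr inl; apply: (dbeta_inj aL bL).
  by rewrite -(xbeta_image aL) E xbeta_image.
- by move=> aL _ /(kept_new a d); rewrite leaf_inl.
- by move=> _ bL /esym /(kept_new b c); rewrite leaf_inl.
- by move=> _ _ E; congr inr; apply: val_inj.
Qed.

Lemma xbeta_onto e : e \in edges D -> exists2 x, x \in tleaves xedge & xbeta x = e.
Proof.
move=> eE; have [l lL lE] := @dbeta_onto _ B _ (arc_map_edge pi_arc eE).
case dbl: (doubled (arc_map pi e)).
  have hC : extra_arc e by rewrite /extra_arc eE dbl.
  by exists (inr (Sub e hC)); rewrite ?leaf_inr.
exists (inl l); first by rewrite leaf_inl lL lE dbl.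
by apply: xbeta_inl; rewrite ?lE ?dbl // in_fibre eE eqxx.
Qed.

Definition expanded : dbdec D :=
  DBDec expanded_tree expanded_deg xbeta_inj xbeta_in xbeta_onto.

(* An old tree edge tu: the new side consists of the kept leaves of the old
   side and the pendants of its doubled leaves, so its arcs are exactly the
   preimage of the old side's arcs. *)
Section OldEdge.
Variables t u : T.
Hypothesis tu : te t u.

Definition on_u_side (x : T') : Prop :=
  match x with
  | inl a => connect (cut te t u) u a
  | inr c => exists2 l, (l \in L) && (beta l == arc_map pi (val c)) & connect (cut te t u) u l
  end.

Lemma on_u_side_connect x : connect (cut xedge (inl t) (inl u)) (inl u) x -> on_u_side x.
Proof.
move/connectP => [p pp ->]; elim/last_ind: p pp => [|p z IH] /=; first by rewrite connect0.
rewrite rcons_path last_rcons => /andP [pp step]; have := IH pp.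
move: step; rewrite /cut; case: (last (inl u) p) => [a|c]; case: z => [b|d] //=.
- by move=> h ua; apply: connect_trans ua (connect1 (e := cut te t u) h).
- by move=> /andP [h _] ua; exists a.
- move=> /andP [/andP [bL /eqP bE] _] [l /andP [lL /eqP lE] ul].
  by rewrite (leaf_label_inj bL lL bE lE).
Qed.

Lemma connect_on_u_side_inl a :
  connect (cut te t u) u a -> connect (cut xedge (inl t) (inl u)) (inl u) (inl a).
Proof. by apply: connect_morph => x y xy; apply: connect1. Qed.

Lemma connect_on_u_side_inr (c : C) l : (l \in L) && (beta l == arc_map pi (val c)) ->
  connect (cut te t u) u l -> connect (cut xedge (inl t) (inl u)) (inl u) (inr c).
Proof.
move=> lc ul; apply: connect_trans (connect_on_u_side_inl ul) (connect1 _).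
by rewrite /cut /= lc; apply/negP; case/orP => /andP [_ /eqP].
Qed.

Lemma expanded_side : xbeta @: side (B := expanded) (inl t) (inl u) =
  [set e in edges D | arc_map pi e \in beta @: side t u].
Proof.
apply/setP => e; apply/imsetP/idP.
  case => x; rewrite (@in_side _ expanded) => /andP [xL /on_u_side_connect] ux ->.
  case: x xL ux => [a|c] xL /=.
    move: (xL); rewrite leaf_inl => /andP [aL _] ua.
    rewrite inE (xbeta_in xL) xbeta_image //.
    by apply: imset_f; rewrite in_side aL.
  move=> [l /andP [lL /eqP lE] ul]; case/andP: (valP c) => cE _.
  by rewrite inE cE -lE; apply: imset_f; rewrite in_side lL.
rewrite inE => /andP [eE /imsetP [l]]; rewrite in_side => /andP [lL ul] lE.
case dbl: (doubled (arc_map pi e)).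
  have hC : extra_arc e by rewrite /extra_arc eE dbl.
  exists (inr (Sub e hC)) => //; rewrite (@in_side _ expanded) leaf_inr /=.
  by apply: (connect_on_u_side_inr (l := l)); rewrite ?lL /= -?lE ?eqxx.
exists (inl l); first by rewrite (@in_side _ expanded) leaf_inl lL -lE dbl connect_on_u_side_inl.
by apply/esym/xbeta_inl; rewrite -?lE ?dbl // in_fibre eE eqxx.
Qed.

Lemma old_edge_order : edge_order (B := expanded) (inl t) (inl u) <= width B.
Proof.
rewrite /edge_order expanded_side.
exact: leq_trans (fD_preimage_le pi_arc pi_glue Q_sources_or_sinks _) (edge_order_le_width tu).
Qed.

End OldEdge.

(* a new pendant edge has a single leaf on the pendant's side, whose arc maps
   to the label of a leaf of B *)
Lemma pendant_edge_order a (c : C) : xedge (inl a) (inr c) ->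
  edge_order (B := expanded) (inl a) (inr c) <= width B.
Proof.
move=> ac; have sideE : side (B := expanded) (inl a) (inr c) = [set inr c].
  apply/setP => x; rewrite (@in_side _ expanded) in_set1.
  apply/andP/eqP => [[xL]|->]; last by rewrite leaf_inr connect0.
  move/connectP => [[//|y p] /= /andP [/andP [cy notcut] _] _]; exfalso.
  have [b [yb bL bE]] := extra_neighbour cy; move: notcut ac; rewrite yb /=.
  by move=> + /andP [aL /eqP aE]; rewrite (leaf_label_inj bL aL bE aE) !eqxx.
rewrite /edge_order sideE imset_set1 /=; move: ac => /andP [aL /eqP aE].
case/andP: (valP c) => cE _.
by apply: leq_trans (fD_single_le pi_arc pi_glue Q_sources_or_sinks cE) _; rewrite -aE leaf_order_le_width.
Qed.

Lemma expansion_width : width expanded <= width B.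
Proof.
apply/bigmax_leqP => [[x y]] /= xy.
case: x y xy => [t|c] [u|d] // xy.
- exact: old_edge_order.
- exact: pendant_edge_order.
- rewrite (@edge_order_sym _ expanded (inr c) (inl u) xy).
  by apply: pendant_edge_order; rewrite xedge_sym.
Qed.

End Expansion.

Definition ss_quotient (D H : digraph) : Prop :=
  exists (pi : dV D -> dV H) (Q : {set dV D}),
    [/\ (forall u v, dE u v -> dE (pi u) (pi v)),
        (forall a b, dE a b -> exists u v, [/\ pi u = a, pi v = b & dE u v]),
        (forall u v, pi u = pi v -> u = v \/ (u \in Q /\ v \in Q)),
        (forall u, u \in Q -> is_source u) \/ (forall u, u \in Q -> is_sink u)
      & #|Q| <= 2].

Lemma isomorphic_ss_quotient D H : isomorphic D H -> ss_quotient D H.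
Proof.
move=> [f [[g fg gf] fE]]; exists f, set0; split.
- by move=> u v; rewrite fE.
- by move=> a b ab; exists (g a), (g b); rewrite !gf -fE !gf.
- by move=> u v /(can_inj fg) ->; left.
- by left => u; rewrite inE.
- by rewrite cards0.
Qed.

Lemma ss_step_ss_quotient D H : ss_step D H -> ss_quotient D H.
Proof.
move=> [x [y [/andP [xy ss] [f [fs fxy finj fE]]]]].
exists f, [set x; y]; split.
- by move=> u v uv; apply/fE; exists u, v.
- by move=> a b /fE [u [v [? ? ?]]]; exists u, v.
- move=> u v /finj [->|[[-> ->]|[-> ->]]]; [by left|right|right];
    by rewrite !inE !eqxx ?orbT.
- by case/orP: ss => /andP [sx sy]; [left|right] => u; rewrite !inE => /orP [] /eqP ->.
- by rewrite cards2 ltnS leq_b1.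
Qed.

Definition width_equivalent (D H : digraph) : Prop :=
  (forall B : dbdec D, exists B' : dbdec H, width B' <= width B) /\
  (forall B : dbdec H, exists B' : dbdec D, width B' <= width B).

(* the two constructions above; if D has no vertex it has no arc and the
   edgeless decomposition is used *)
Lemma ss_quotient_width_equivalent D H : ss_quotient D H -> width_equivalent D H.
Proof.
move=> [pi [Q [pi_arc arc_lift pi_glue QS Q_small]]]; split => B.
  by exists (restricted pi_arc arc_lift B); apply: (restriction_width _ _ pi_glue QS).
case: (pickP (fun _ : dV D => true)) => [v _|none].
  by exists (expanded pi_arc arc_lift pi_glue QS Q_small B (v, v)); apply: expansion_width.
have no_arcs (e : dV D * dV D) : e \notin edges D by have := none e.1.
by have [B' w] := edgeless_decomposition no_arcs; exists B'; rewrite w.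
Qed.

Lemma width_equivalent_sym D H : width_equivalent D H -> width_equivalent H D.
Proof. by case. Qed.

Lemma width_equivalent_trans D D' H :
  width_equivalent D D' -> width_equivalent D' H -> width_equivalent D H.
Proof.
move=> [DD' D'D] [D'H HD']; split => B.
  by have [B1 w1] := DD' B; have [B2 w2] := D'H B1; exists B2; apply: leq_trans w2 w1.
by have [B1 w1] := HD' B; have [B2 w2] := D'D B1; exists B2; apply: leq_trans w2 w1.
Qed.

Lemma ss_equiv_width_equivalent D H : ss_equiv D H -> width_equivalent D H.
Proof.
elim => [D0 H0 iso|D0 D1 H0 step _ IH].
  exact/ss_quotient_width_equivalent/isomorphic_ss_quotient.
exact: width_equivalent_trans (ss_quotient_width_equivalent (ss_step_ss_quotient step)) IH.
Qed.

Lemma width_equivalent_dbw D H k : width_equivalent D H -> dbw_is D k -> dbw_is H k.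
Proof.
move=> [DH HD] [[B wB] minB].
have minH (B2 : dbdec H) : k <= width B2.
  by have [B3 w3] := HD B2; apply: leq_trans (minB B3) w3.
have [B' w'] := DH B; split=> //.
by exists B'; apply/eqP; rewrite eqn_leq -{1}wB w' minH.
Qed.

Theorem mainTheorem8 (D H : digraph) :
  ss_equiv D H -> forall k : nat, dbw_is D k <-> dbw_is H k.
Proof.
move=> equiv k; have eqw := ss_equiv_width_equivalent equiv.
by split; apply: width_equivalent_dbw; last apply: width_equivalent_sym.
Qed.
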